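(* Let $p\in(0,1]$, $c_1,c_2\ge0$, $\beta<1$, $\delta_1,\delta_2\in(0,1)$. Define $R=\frac12$, $S=(1-p)\frac12$, and for $i=1,2$: $T_i=p+(1-p)\frac12-c_i$, $Q_i=p^2\frac12\beta+p(1-p)+(1-p)^2\frac12-c_i$. (Grim Trigger) $\frac{R}{1-\delta_i}\ge T_i+\frac{\delta_iQ_i}{1-\delta_i}$ for both $i=1,2$ if and only if \[\delta_1\ge\frac{p-2c_1}{(1-\beta)p^2+p}\quad\text{and}\quad\delta_2\ge\frac{p-2c_2}{(1-\beta)p^2+p}.\] (Tit-for-Tat) $\frac{R}{1-\delta_i}\ge T_i+\delta_iS+\frac{\delta_i^2}{1-\delta_i}R$ for both $i=1,2$ if and only if \[\delta_1\ge\frac{p-2c_1}{p}\quad\text{and}\quad\delta_2\ge\frac{p-2c_2}{p}.\]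
   Context: Model: two content providers in an infinitely repeated game choose each period to cooperate or attack (ranking manipulation). Each attack succeeds with probability $p$; player $i$ pays cost $c_i$ per attack; $\beta$ is the market degradation factor when both attacks succeed; $\delta_i$ is player $i$'s discount factor. $R,T_i,S,Q_i$ are the stage payoffs for mutual cooperation, lone attack, being attacked while cooperating, and mutual attack. Cooperation is sustainable when each player weakly prefers perpetual cooperation to deviating under the trigger strategy (grim trigger: permanent mutual defection after a deviation; Tit-for-Tat: one round of retaliation then cooperation). *)

From Stdlib Require Import Reals Lra.
Open Scope R_scope.

Definition payR : R := 1/2.
Definition payS (p : R) : R := (1 - p) * (1/2).
Definition payT (p c : R) : R := p + (1 - p) * (1/2) - c.
Definition payQ (p beta c : R) : R :=
  p^2 * (1/2) * beta + p * (1 - p) + (1 - p)^2 * (1/2) - c.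

Definition grim_ok (p beta c delta : R) : Prop :=
  payR / (1 - delta) >= payT p c + delta * payQ p beta c / (1 - delta).

Definition tft_ok (p c delta : R) : Prop :=
  payR / (1 - delta) >= payT p c + delta * payS p + delta^2 / (1 - delta) * payR.

From Stdlib Require Import Reals Lra.
Open Scope R_scope.

(* Multiplied by 2(1 - delta) > 0, the grim-trigger condition becomes the linear
   inequality p - 2c <= delta ((1 - beta) p^2 + p); in the tit-for-tat condition the
   geometric tail delta^2 R / (1 - delta) cancels against R / (1 - delta) and what is
   left is p - 2c <= delta p.  Dividing by the positive coefficient of delta gives the
   thresholds, and the two-player statement is the conjunction of the one-player ones. *)

Lemma Rdiv_nonneg_iff (x y : R) : 0 < y -> (0 <= x / y <-> 0 <= x).
Proof.
  intros hy; split; intros h.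
  - replace x with (x / y * y) by (field; lra).
    apply Rmult_le_pos; lra.
  - apply Rmult_le_pos; [exact h | left; apply Rinv_0_lt_compat, hy].
Qed.

Lemma Rge_div_iff (a b d : R) : 0 < b -> (d >= a / b <-> a <= d * b).
Proof.
  intros hb; split; intros h.
  - replace a with (a / b * b) by (field; lra).
    apply Rmult_le_compat_r; lra.
  - apply Rle_ge, Rmult_le_reg_r with b; [exact hb |].
    replace (a / b * b) with a by (field; lra); exact h.
Qed.

Definition grim_coef (p beta : R) : R := (1 - beta) * p^2 + p.

Lemma grim_coef_pos (p beta : R) : 0 < p -> beta < 1 -> 0 < grim_coef p beta.
Proof.
  intros hp hbeta; unfold grim_coef.
  assert (0 < (1 - beta) * p^2) by (apply Rmult_lt_0_compat; [lra | simpl; nra]).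
  lra.
Qed.

Lemma grim_ok_linear (p beta c d : R) : d < 1 ->
  (grim_ok p beta c d <-> p - 2 * c <= d * grim_coef p beta).
Proof.
  intros hd; unfold grim_ok.
  assert (gain : payR / (1 - d) - (payT p c + d * payQ p beta c / (1 - d))
                 = (d * grim_coef p beta - (p - 2 * c)) / (2 * (1 - d))).
  { unfold payR, payT, payQ, grim_coef; field; lra. }
  pose proof (Rdiv_nonneg_iff (d * grim_coef p beta - (p - 2 * c)) (2 * (1 - d))
                ltac:(lra)).
  split; intros h; lra.
Qed.

Lemma tft_ok_linear (p c d : R) : d < 1 ->
  (tft_ok p c d <-> p - 2 * c <= d * p).
Proof.
  intros hd; unfold tft_ok.
  assert (gain : payR / (1 - d) - (payT p c + d * payS p + d^2 / (1 - d) * payR)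
                 = (d * p - (p - 2 * c)) / 2).
  { unfold payR, payT, payS; field; lra. }
  split; intros h; lra.
Qed.

Lemma grim_ok_iff (p beta c d : R) : 0 < p -> beta < 1 -> d < 1 ->
  (grim_ok p beta c d <-> d >= (p - 2 * c) / ((1 - beta) * p^2 + p)).
Proof.
  intros hp hbeta hd.
  rewrite grim_ok_linear by exact hd.
  symmetry; apply Rge_div_iff, grim_coef_pos; assumption.
Qed.

Lemma tft_ok_iff (p c d : R) : 0 < p -> d < 1 ->
  (tft_ok p c d <-> d >= (p - 2 * c) / p).
Proof.
  intros hp hd.
  rewrite tft_ok_linear by exact hd.
  symmetry; apply Rge_div_iff, hp.
Qed.

Theorem theorem8 (p c1 c2 beta d1 d2 : R)
  (hp0 : 0 < p) (hp1 : p <= 1) (hc1 : 0 <= c1) (hc2 : 0 <= c2)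
  (hbeta : beta < 1)
  (hd1a : 0 < d1) (hd1b : d1 < 1) (hd2a : 0 < d2) (hd2b : d2 < 1) :
  ((grim_ok p beta c1 d1 /\ grim_ok p beta c2 d2) <->
     (d1 >= (p - 2 * c1) / ((1 - beta) * p^2 + p) /\
      d2 >= (p - 2 * c2) / ((1 - beta) * p^2 + p)))
  /\
  ((tft_ok p c1 d1 /\ tft_ok p c2 d2) <->
     (d1 >= (p - 2 * c1) / p /\ d2 >= (p - 2 * c2) / p)).
Proof.
  rewrite !grim_ok_iff, !tft_ok_iff by assumption.
  tauto.
Qed.
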